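(* For every small category $\mathcal C$ and every functor $\mathcal G:\mathcal C\to\mathbf{Grp}$ there is an isomorphism $\pi_1(\mathrm{hocolim}^{\mathcal C}B\mathcal G)\cong\mathrm{colim}^{\mathcal C}\mathcal G$. In particular, $\mathrm{hocolim}^{\mathcal C}B\mathcal G$ is simply connected if and only if $\mathrm{colim}^{\mathcal C}\mathcal G$ is the trivial group.
   Context: $\mathrm{colim}^{\mathcal C}\mathcal G$ is the ordinary colimit in the category of groups. $B\mathcal G$ is the diagram $c\mapsto B(\mathcal G(c))$ of nerves of groups (pointed simplicial sets with one vertex). For a diagram $F:\mathcal C\to\mathbf{sSet}_*$, $\mathrm{hocolim}^{\mathcal C}F$ is the Bousfield–Kan pointed homotopy colimit, realized as the pointed simplicial set with $n$-simplices $\bigvee_{c_0\to\cdots\to c_n}F(c_0)_n$ (diagonal of the simplicial replacement). *)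

From Stdlib Require Import List Bool Relations ClassicalEpsilon.
Import ListNotations.


Record Cat := {
  Ob : Type;
  Hom : Ob -> Ob -> Type;
  idm : forall a, Hom a a;
  comp : forall a b c, Hom b c -> Hom a b -> Hom a c;
  comp_id_l : forall a b (f : Hom a b), comp a b b (idm b) f = f;
  comp_id_r : forall a b (f : Hom a b), comp a a b f (idm a) = f;
  comp_assoc : forall a b c d (h : Hom c d) (g : Hom b c) (f : Hom a b),
      comp a b d (comp b c d h g) f = comp a c d h (comp a b c g f)
}.
Arguments comp {_ _ _ _} _ _.
Arguments idm {_} _.

Record Grp := {
  gcar :> Type;
  gmul : gcar -> gcar -> gcar;
  gone : gcar;
  ginv : gcar -> gcar;
  gmul_assoc : forall x y z, gmul x (gmul y z) = gmul (gmul x y) z;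
  gmul_1l : forall x, gmul gone x = x;
  gmul_1r : forall x, gmul x gone = x;
  gmul_Vl : forall x, gmul (ginv x) x = gone;
  gmul_Vr : forall x, gmul x (ginv x) = gone
}.
Arguments gmul {_} _ _.
Arguments gone {_}.
Arguments ginv {_} _.

Definition is_hom {G H : Grp} (f : G -> H) : Prop :=
  forall x y, f (gmul x y) = gmul (f x) (f y).

Record GrpFunctor (C : Cat) := {
  fobj : Ob C -> Grp;
  fmap : forall a b, Hom C a b -> fobj a -> fobj b;
  fmap_hom : forall a b (f : Hom C a b), is_hom (fmap a b f);
  fmap_id : forall a x, fmap a a (idm a) x = x;
  fmap_comp : forall a b c (g : Hom C b c) (f : Hom C a b) x,
      fmap a c (comp g f) x = fmap b c g (fmap a b f x)
}.
Arguments fobj {_} _ _.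
Arguments fmap {_} _ {_ _} _ _.

Definition is_cocone {C : Cat} (F : GrpFunctor C) {L : Grp}
  (iota : forall c, fobj F c -> L) : Prop :=
  (forall c, is_hom (iota c)) /\
  (forall a b (f : Hom C a b) x, iota b (fmap F f x) = iota a x).

Definition is_colimit {C : Cat} (F : GrpFunctor C) {L : Grp}
  (iota : forall c, fobj F c -> L) : Prop :=
  is_cocone F iota /\
  forall (H : Grp) (kappa : forall c, fobj F c -> H),
    is_cocone F kappa ->
    exists u : L -> H, is_hom u /\ (forall c x, u (iota c x) = kappa c x) /\
      forall v : L -> H, is_hom v -> (forall c x, v (iota c x) = kappa c x) ->
        forall y, v y = u y.

(* Nerve B G of a group: B(G)_n = G^n, one vertex.                     *)
Fixpoint ntup (G : Grp) (n : nat) : Type :=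
  match n with 0 => unit | S n => (gcar G * ntup G n)%type end.

Fixpoint bone (G : Grp) (n : nat) : ntup G n :=
  match n with 0 => tt | S n => (gone, bone G n) end.

Definition bface0 {G : Grp} {n : nat} (x : ntup G (S n)) : ntup G n := snd x.

(* d_{i+1}: multiplies entries i+1, i+2 (1-based), or drops the last one *)
Fixpoint bfaceS (G : Grp) (i n : nat) : ntup G (S n) -> ntup G n :=
  match n return ntup G (S n) -> ntup G n with
  | 0 => fun _ => tt
  | S n' => fun x =>
      match i with
      | 0 => (gmul (fst x) (fst (snd x)), snd (snd x))
      | S i' => (fst x, bfaceS G i' n' (snd x))
      end
  end.

Arguments bfaceS {G} i n _.
Definition bface {G : Grp} (i n : nat) (x : ntup G (S n)) : ntup G n :=
  match i with 0 => bface0 x | S i' => bfaceS i' n x end.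

Fixpoint bdeg (G : Grp) (i n : nat) : ntup G n -> ntup G (S n) :=
  match i with
  | 0 => fun x => (gone, x)
  | S i' =>
      match n return ntup G n -> ntup G (S n) with
      | 0 => fun x => (gone, x)
      | S n' => fun x => (fst x, bdeg G i' n' (snd x))
      end
  end.

Arguments bdeg {G} i n _.
Fixpoint bmap (G H : Grp) (h : G -> H) (n : nat) : ntup G n -> ntup H n :=
  match n return ntup G n -> ntup H n with
  | 0 => fun _ => tt
  | S n' => fun x => (h (fst x), bmap G H h n' (snd x))
  end.

Arguments bmap {G H} h n _.
Arguments bone {G} n.
(* Chains c = c0 -> c1 -> ... -> cn in C                               *)
Fixpoint chain (C : Cat) (c : Ob C) (n : nat) : Type :=
  match n with
  | 0 => unit
  | S n => {c' : Ob C & (Hom C c c' * chain C c' n)%type}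
  end.
Arguments chain {C} c n.

(* d_{i+1} on chains: deletes c_{i+1} (composing, or dropping the last) *)
Fixpoint cfaceS (C : Cat) (i n : nat) (c : Ob C) : chain c (S n) -> chain c n :=
  match n return chain c (S n) -> chain c n with
  | 0 => fun _ => tt
  | S n' => fun ch =>
      match ch with
      | existT _ c1 (f, rest) =>
          match i with
          | 0 => match rest with
                 | existT _ c2 (g, rest') => existT _ c2 (comp g f, rest')
                 end
          | S i' => existT _ c1 (f, cfaceS C i' n' c1 rest)
          end
      end
  end.

Arguments cfaceS {C} i n c _.
Fixpoint cdeg (C : Cat) (i n : nat) (c : Ob C) : chain c n -> chain c (S n) :=
  match i with
  | 0 => fun ch => existT _ c (idm c, ch)
  | S i' =>
      match n return chain c n -> chain c (S n) with
      | 0 => fun ch => existT _ c (idm c, ch)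
      | S n' => fun ch =>
          match ch with
          | existT _ c1 (f, rest) => existT _ c1 (f, cdeg C i' n' c1 rest)
          end
      end
  end.

Arguments cdeg {C} i n c _.
(* hocolim^C B G : n-simplices  \/_{c0 -> ... -> cn} (B G(c0))_n ,
   the wedge being represented as the base point [None] together with
   the non-base simplices of each wedge summand.                       *)
Section Hocolim.
Variables (C : Cat) (F : GrpFunctor C).

Definition hsimp (n : nat) : Type :=
  option {c : Ob C & (chain c n * {x : ntup (fobj F c) n | x <> bone n})%type}.

Definition hmk (n : nat) (c : Ob C) (ch : chain c n) (x : ntup (fobj F c) n)
  : hsimp n :=
  match excluded_middle_informative (x = bone n) with
  | left _ => None
  | right nx => Some (existT _ c (ch, exist _ x nx))
  end.

Definition hface (n : nat) (i : nat) (s : hsimp (S n)) : hsimp n :=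
  match s with
  | None => None
  | Some (existT _ c (ch, exist _ x _)) =>
      match i with
      | 0 => match ch with
             | existT _ c1 (f, rest) =>
                 hmk n c1 rest (bmap (fmap F f) n (bface0 x))
             end
      | S i' => hmk n c (cfaceS i' n c ch) (bfaceS i' n x)
      end
  end.

Definition hdeg (n : nat) (i : nat) (s : hsimp n) : hsimp (S n) :=
  match s with
  | None => None
  | Some (existT _ c (ch, exist _ x _)) => hmk (S n) c (cdeg i n c ch) (bdeg i n x)
  end.

Definition hbase : hsimp 0 := None.
End Hocolim.

(* Fundamental group of a simplicial set (X, d, s) at a vertex v, as the
   edge-path group: edge loops at v modulo the equivalence generated by
   cancelling e e^{-1}, deleting degenerate edges s_0 w, and replacing
   (d_2 sigma)(d_0 sigma) by d_1 sigma for 2-simplices sigma.            *)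
Section EdgePath.
Variables (X : nat -> Type)
          (d : forall n, nat -> X (S n) -> X n)
          (s : forall n, nat -> X n -> X (S n)).

Definition step := (X 1 * bool)%type.  (* true = forward *)
Definition ssrc (e : step) : X 0 := if snd e then d 0 1 (fst e) else d 0 0 (fst e).
Definition stgt (e : step) : X 0 := if snd e then d 0 0 (fst e) else d 0 1 (fst e).

Fixpoint is_path (v w : X 0) (p : list step) : Prop :=
  match p with
  | [] => v = w
  | e :: q => ssrc e = v /\ is_path (stgt e) w q
  end.

Inductive elem_move : list step -> list step -> Prop :=
| em_cancel (e : X 1) (b : bool) (p q : list step) :
    elem_move (p ++ (e, b) :: (e, negb b) :: q) (p ++ q)
| em_degen (w : X 0) (b : bool) (p q : list step) :
    elem_move (p ++ (s 0 0 w, b) :: q) (p ++ q)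
| em_tri (sg : X 2) (p q : list step) :
    elem_move (p ++ (d 1 2 sg, true) :: (d 1 0 sg, true) :: q)
              (p ++ (d 1 1 sg, true) :: q).

Definition loop_move (v : X 0) (p q : list step) : Prop :=
  is_path v v p /\ is_path v v q /\ elem_move p q.

Definition loop_equiv (v : X 0) : list step -> list step -> Prop :=
  clos_refl_sym_trans _ (loop_move v).

(* phi : edge loops at v -> L induces a group isomorphism pi_1(X, v) ~= L
   (group law on loops = concatenation) *)
Definition pi1_iso (v : X 0) (L : Grp) (phi : list step -> L) : Prop :=
  (forall p q, is_path v v p -> is_path v v q ->
     (loop_equiv v p q <-> phi p = phi q)) /\
  (forall p q, is_path v v p -> is_path v v q -> phi (p ++ q) = gmul (phi p) (phi q)) /\
  (forall y : L, exists p, is_path v v p /\ phi p = y).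

Definition simply_connected (v : X 0) : Prop :=
  (forall w : X 0, exists p, is_path v w p) /\
  (forall p, is_path v v p -> loop_equiv v p []).
End EdgePath.

(* Edges of hocolim B G are the pairs (c -> c', x) with x in G(c), and there is
   a single vertex.  Sending such an edge to the image of x in colim G turns
   every 2-simplex relation into the cocone identity, so edge loops evaluate
   to colim G.  Conversely the classes of the edges (c -> c, x) form a cocone
   into pi_1, and the universal property gives the inverse homomorphism. *)
From Stdlib Require Import List Bool Relations ClassicalEpsilon
  FunctionalExtensionality PropExtensionality ProofIrrelevance.
Import ListNotations.

Lemma gmul_cancel_l (G : Grp) (a x y : G) : gmul a x = gmul a y -> x = y.
Proof.
  intros H. rewrite <- (gmul_1l G x), <- (gmul_1l G y), <- (gmul_Vl G a),
    <- !gmul_assoc, H; reflexivity.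
Qed.

Lemma ginv_unique (G : Grp) (a b : G) : gmul a b = gone -> b = ginv a.
Proof. intros H; apply (gmul_cancel_l G a); rewrite H, gmul_Vr; reflexivity. Qed.

Lemma gidem_one (G : Grp) (a : G) : gmul a a = a -> a = gone.
Proof. intros H; apply (gmul_cancel_l G a); rewrite H, gmul_1r; reflexivity. Qed.

Lemma ginv_one (G : Grp) : ginv (@gone G) = gone.
Proof. symmetry; apply ginv_unique, gmul_1l. Qed.

Lemma hom_one {G H : Grp} (f : G -> H) : is_hom f -> f gone = gone.
Proof. intros Hf; apply gidem_one; rewrite <- Hf, gmul_1l; reflexivity. Qed.

Lemma hom_inv {G H : Grp} (f : G -> H) : is_hom f -> forall x, f (ginv x) = ginv (f x).
Proof. intros Hf x; apply ginv_unique; rewrite <- Hf, gmul_Vr; apply hom_one, Hf. Qed.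

Lemma colimit_endo_id {C : Cat} (F : GrpFunctor C) (L : Grp)
  (iota : forall c, fobj F c -> L) (v : L -> L) :
  is_colimit F iota -> is_hom v -> (forall c x, v (iota c x) = iota c x) ->
  forall y, v y = y.
Proof.
  intros [Hcoc Huniv] Hv Hvi y.
  destruct (Huniv L iota Hcoc) as [u [_ [_ Hu]]].
  rewrite (Hu v Hv Hvi). symmetry.
  apply (Hu (fun y => y)); [intros a b |]; reflexivity.
Qed.

Section WordGroup.
Variables (A : Type) (R : list A -> list A -> Prop).
Hypotheses (R_refl : forall p, R p p)
           (R_sym : forall p q, R p q -> R q p)
           (R_trans : forall p q r, R p q -> R q r -> R p r)
           (R_cong : forall a p q b, R p q -> R (a ++ p ++ b) (a ++ q ++ b)).
Variable word_inv : list A -> list A.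
Hypotheses (R_inv_r : forall p, R (p ++ word_inv p) [])
           (R_inv_l : forall p, R (word_inv p ++ p) []).

(* Classes are represented as the predicates [R p]; propositional and
   functional extensionality make equal classes equal. *)
Definition word_class_type := {P : list A -> Prop | exists p, P = R p}.

Definition word_class (p : list A) : word_class_type :=
  exist _ (R p) (ex_intro _ p eq_refl).

Lemma word_class_eq p q : word_class p = word_class q <-> R p q.
Proof.
  split.
  - intros H. change (R p q) with (proj1_sig (word_class p) q).
    rewrite H. apply R_refl.
  - intros H. apply subset_eq_compat.
    extensionality x. apply propositional_extensionality; split; eauto.
Qed.

Definition word_repr (a : word_class_type) : list A :=
  proj1_sig (constructive_indefinite_description _ (proj2_sig a)).

Lemma word_reprK a : word_class (word_repr a) = a.
Proof.
  destruct a as [P HP]. unfold word_repr; simpl.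
  destruct (constructive_indefinite_description _ HP) as [p Hp]; simpl.
  subst P. apply subset_eq_compat; reflexivity.
Qed.

Lemma word_class_surj a : exists p, a = word_class p.
Proof. exists (word_repr a); symmetry; apply word_reprK. Qed.

Definition word_mul (a b : word_class_type) := word_class (word_repr a ++ word_repr b).

Lemma word_mul_class p q : word_mul (word_class p) (word_class q) = word_class (p ++ q).
Proof.
  assert (Hp : R (word_repr (word_class p)) p) by apply word_class_eq, word_reprK.
  assert (Hq : R (word_repr (word_class q)) q) by apply word_class_eq, word_reprK.
  apply word_class_eq, R_trans with (p ++ word_repr (word_class q)).
  - exact (R_cong [] _ _ _ Hp).
  - pose proof (R_cong p _ _ [] Hq) as H; rewrite !app_nil_r in H; exact H.
Qed.

Definition word_one := word_class [].
Definition word_inverse (a : word_class_type) := word_class (word_inv (word_repr a)).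

Lemma word_mul_assoc x y z : word_mul x (word_mul y z) = word_mul (word_mul x y) z.
Proof.
  destruct (word_class_surj x) as [p ->], (word_class_surj y) as [q ->],
    (word_class_surj z) as [r ->].
  rewrite !word_mul_class, app_assoc; reflexivity.
Qed.

Lemma word_mul_1l x : word_mul word_one x = x.
Proof. destruct (word_class_surj x) as [p ->]; apply word_mul_class. Qed.

Lemma word_mul_1r x : word_mul x word_one = x.
Proof.
  destruct (word_class_surj x) as [p ->].
  unfold word_one; rewrite word_mul_class, app_nil_r; reflexivity.
Qed.

Lemma word_mul_Vl x : word_mul (word_inverse x) x = word_one.
Proof.
  unfold word_inverse. rewrite <- (word_reprK x) at 2.
  rewrite word_mul_class. apply word_class_eq, R_inv_l.
Qed.

Lemma word_mul_Vr x : word_mul x (word_inverse x) = word_one.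
Proof.
  unfold word_inverse. rewrite <- (word_reprK x) at 1.
  rewrite word_mul_class. apply word_class_eq, R_inv_r.
Qed.

Definition word_group : Grp :=
  Build_Grp word_class_type word_mul word_one word_inverse
    word_mul_assoc word_mul_1l word_mul_1r word_mul_Vl word_mul_Vr.

End WordGroup.

Section ReducedEdgePath.
Variables (X : nat -> Type)
          (d : forall n, nat -> X (S n) -> X n)
          (s : forall n, nat -> X n -> X (S n))
          (v : X 0).
Hypothesis vertex_unique : forall w : X 0, w = v.

Notation loop_equiv := (loop_equiv X d s v).
Notation elem_move := (elem_move X d s).

Lemma is_path_reduced p : forall w w', is_path X d w w' p.
Proof.
  induction p as [|e p IH]; intros w w'; simpl.
  - rewrite (vertex_unique w), (vertex_unique w'); reflexivity.
  - split; [rewrite (vertex_unique w); apply vertex_unique | apply IH].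
Qed.

Lemma loop_equiv_move p q : elem_move p q -> loop_equiv p q.
Proof. intros H. apply rst_step. repeat split; [apply is_path_reduced.. | exact H]. Qed.

Lemma elem_move_cong a b p q : elem_move p q -> elem_move (a ++ p ++ b) (a ++ q ++ b).
Proof.
  intros H; destruct H;
    rewrite <- !app_assoc, <- !app_comm_cons, !(app_assoc a p).
  - apply em_cancel.
  - apply em_degen.
  - apply em_tri.
Qed.

Lemma loop_equiv_cong a p q b : loop_equiv p q -> loop_equiv (a ++ p ++ b) (a ++ q ++ b).
Proof.
  intros H; induction H as [p q [_ [_ Hm]] | | |].
  - apply loop_equiv_move, elem_move_cong, Hm.
  - apply rst_refl.
  - apply rst_sym; assumption.
  - eapply rst_trans; eassumption.
Qed.

Definition path_inv (p : list (step X)) : list (step X) :=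
  rev (map (fun e => (fst e, negb (snd e))) p).

Lemma loop_equiv_inv_r p : loop_equiv (p ++ path_inv p) [].
Proof.
  induction p as [|[e b] p IH]; [apply rst_refl |].
  unfold path_inv; simpl; fold (path_inv p).
  apply rst_trans with ([(e, b)] ++ [] ++ [(e, negb b)]).
  - rewrite app_assoc. exact (loop_equiv_cong [(e, b)] _ _ [(e, negb b)] IH).
  - apply loop_equiv_move, (em_cancel X d s e b [] []).
Qed.

Lemma loop_equiv_inv_l p : loop_equiv (path_inv p ++ p) [].
Proof.
  induction p as [|[e b] p IH]; [apply rst_refl |].
  unfold path_inv; simpl; fold (path_inv p).
  apply rst_trans with (path_inv p ++ [] ++ p); [| exact IH].
  rewrite <- app_assoc.
  apply (loop_equiv_cong (path_inv p) [(e, negb b); (e, b)] [] p), loop_equiv_move.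
  rewrite <- (negb_involutive b) at 2. apply (em_cancel X d s e (negb b) [] []).
Qed.

Definition edge_path_group : Grp :=
  word_group (step X) loop_equiv (@rst_refl _ _) (@rst_sym _ _) (@rst_trans _ _)
    loop_equiv_cong path_inv loop_equiv_inv_r loop_equiv_inv_l.

Definition loop_class (p : list (step X)) : edge_path_group :=
  word_class (step X) loop_equiv p.

Lemma loop_class_app p q : gmul (loop_class p) (loop_class q) = loop_class (p ++ q).
Proof.
  apply word_mul_class;
    [apply rst_refl | apply rst_sym | apply rst_trans | apply loop_equiv_cong].
Qed.

Lemma loop_class_eq p q : loop_class p = loop_class q <-> loop_equiv p q.
Proof. apply word_class_eq; [apply rst_refl | apply rst_sym | apply rst_trans]. Qed.

Lemma simply_connected_iff_trivial (L : Grp) (phi : list (step X) -> L) :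
  pi1_iso X d s v L phi ->
  (simply_connected X d s v <-> forall y : L, y = gone).
Proof.
  intros [Hequiv [Happ Hsurj]].
  assert (Hnil : phi [] = gone).
  { apply gidem_one. rewrite <- Happ by apply is_path_reduced; reflexivity. }
  split.
  - intros [_ Hsc] y. destruct (Hsurj y) as [p [Hp <-]].
    rewrite <- Hnil. apply Hequiv; [exact Hp | apply is_path_reduced | apply Hsc, Hp].
  - intros Htriv. split; [intros w; exists []; apply is_path_reduced |].
    intros p Hp. apply Hequiv; [exact Hp | apply is_path_reduced |].
    rewrite Hnil; apply Htriv.
Qed.

Section Evaluation.
Variables (L : Grp) (ev : X 1 -> L).
Hypotheses (ev_degen : forall w, ev (s 0 0 w) = gone)
           (ev_tri : forall sg, gmul (ev (d 1 2 sg)) (ev (d 1 0 sg)) = ev (d 1 1 sg)).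

Definition step_eval (e : step X) : L :=
  if snd e then ev (fst e) else ginv (ev (fst e)).

Fixpoint word_eval (p : list (step X)) : L :=
  match p with [] => gone | e :: q => gmul (step_eval e) (word_eval q) end.

Lemma word_eval_app p q : word_eval (p ++ q) = gmul (word_eval p) (word_eval q).
Proof.
  induction p as [|e p IH]; simpl.
  - rewrite gmul_1l; reflexivity.
  - rewrite IH, gmul_assoc; reflexivity.
Qed.

Lemma word_eval_move p q : elem_move p q -> word_eval p = word_eval q.
Proof.
  intros H; destruct H; rewrite !word_eval_app; simpl; f_equal; rewrite ?gmul_assoc.
  - unfold step_eval; destruct b; simpl; rewrite ?gmul_Vr, ?gmul_Vl; apply gmul_1l.
  - unfold step_eval; destruct b; simpl; rewrite ev_degen, ?ginv_one; apply gmul_1l.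
  - unfold step_eval; simpl; rewrite ev_tri; reflexivity.
Qed.

Lemma word_eval_equiv p q : loop_equiv p q -> word_eval p = word_eval q.
Proof.
  intros H; induction H as [p q [_ [_ Hm]] | | |]; [apply word_eval_move, Hm | ..];
    congruence.
Qed.

Definition class_eval (a : edge_path_group) : L := word_eval (word_repr _ _ a).

Lemma class_eval_loop_class p : class_eval (loop_class p) = word_eval p.
Proof.
  apply word_eval_equiv, loop_class_eq. apply (word_reprK (step X) loop_equiv).
Qed.

Lemma class_eval_hom : is_hom class_eval.
Proof.
  intros a b.
  destruct (word_class_surj _ _ a) as [p ->], (word_class_surj _ _ b) as [q ->].
  change (class_eval (gmul (loop_class p) (loop_class q))
          = gmul (class_eval (loop_class p)) (class_eval (loop_class q))).
  rewrite loop_class_app, !class_eval_loop_class. apply word_eval_app.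
Qed.

Lemma loop_class_word_eval (u : L -> edge_path_group) :
  is_hom u -> (forall e, loop_class [(e, true)] = u (ev e)) ->
  forall p, loop_class p = u (word_eval p).
Proof.
  intros Hu Hedge. induction p as [|[e b] p IH]; [symmetry; apply (hom_one u Hu) |].
  change ((e, b) :: p) with ([(e, b)] ++ p).
  rewrite <- loop_class_app, IH, word_eval_app, Hu; f_equal.
  destruct b; simpl; rewrite gmul_1r; unfold step_eval; simpl; [apply Hedge |].
  rewrite (hom_inv u Hu), <- Hedge. apply (ginv_unique edge_path_group).
  rewrite loop_class_app. apply loop_class_eq, loop_equiv_move.
  apply (em_cancel X d s e true [] []).
Qed.

Lemma pi1_iso_of_inverse (u : L -> edge_path_group) :
  (forall p, loop_class p = u (word_eval p)) ->
  (forall y, class_eval (u y) = y) ->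
  pi1_iso X d s v L word_eval.
Proof.
  intros Hclass Hsect. split; [| split].
  - intros p q _ _. split; [apply word_eval_equiv |].
    intros H. apply loop_class_eq. rewrite !Hclass, H. reflexivity.
  - intros p q _ _. apply word_eval_app.
  - intros y. destruct (word_class_surj _ _ (u y)) as [p Hp].
    exists p. split; [apply is_path_reduced |].
    rewrite <- (Hsect y), Hp. symmetry; apply class_eval_loop_class.
Qed.

End Evaluation.
End ReducedEdgePath.

Section Hocolim.
Variables (C : Cat) (F : GrpFunctor C).

Notation X := (hsimp C F).
Notation loop_equiv := (loop_equiv X (hface C F) (hdeg C F) (hbase C F)).

Lemma hsimp0_base (w : X 0) : w = hbase C F.
Proof. destruct w as [[c [ch [[] nx]]]|]; [exfalso; apply nx |]; reflexivity. Qed.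

Notation edge_path_group := (edge_path_group X (hface C F) (hdeg C F) (hbase C F) hsimp0_base).
Notation loop_class := (loop_class X (hface C F) (hdeg C F) (hbase C F) hsimp0_base).

Lemma hmk_some n c ch x (nx : x <> bone n) :
  hmk C F n c ch x = Some (existT _ c (ch, exist _ x nx)).
Proof.
  unfold hmk. destruct (excluded_middle_informative _) as [e | nx']; [contradiction |].
  rewrite (proof_irrelevance _ nx' nx). reflexivity.
Qed.

Lemma hmk_bone n c ch : hmk C F n c ch (bone n) = None.
Proof.
  unfold hmk. destruct (excluded_middle_informative _) as [e | nx]; [| contradiction].
  reflexivity.
Qed.

Definition hedge (c c' : Ob C) (f : Hom C c c') (x : fobj F c) : X 1 :=
  hmk C F 1 c (existT (fun c' => (Hom C c c' * chain c' 0)%type) c' (f, tt)) (x, tt).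

Lemma hedge_one c c' f : hedge c c' f gone = None.
Proof. exact (hmk_bone 1 c _). Qed.

(* The base edge is degenerate ([hdeg 0 0 None = None]). *)
Lemma loop_equiv_drop_base p q b : loop_equiv (p ++ (None, b) :: q) (p ++ q).
Proof.
  apply (loop_equiv_move _ _ _ _ hsimp0_base).
  exact (em_degen X _ (hdeg C F) None b p q).
Qed.

Lemma loop_equiv_hedge_comp c c1 c2 (f : Hom C c c1) (g : Hom C c1 c2) x1 x2 :
  loop_equiv [(hedge c c1 f x1, true); (hedge c1 c2 g (fmap F f x2), true)]
             [(hedge c c2 (comp g f) (gmul x1 x2), true)].
Proof.
  destruct (excluded_middle_informative ((x1, (x2, tt)) = @bone (fobj F c) 2))
    as [e | nx].
  - injection e as -> ->.
    rewrite (hom_one _ (fmap_hom C F c c1 f)), gmul_1l, !hedge_one.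
    exact (loop_equiv_drop_base [] [(None, true)] true).
  - pose (ch := existT _ c1 (f, existT _ c2 (g, tt)) : chain c 2).
    apply (loop_equiv_move _ _ _ _ hsimp0_base).
    exact (em_tri X (hface C F) _ (Some (existT _ c (ch, exist _ (x1, (x2, tt)) nx))) [] []).
Qed.

Lemma loop_equiv_hedge_idm c c' (f : Hom C c c') x :
  loop_equiv [(hedge c c (idm c) x, true)] [(hedge c c' f x, true)].
Proof.
  pose proof (loop_equiv_hedge_comp c c c' (idm c) f x gone) as H.
  rewrite fmap_id, comp_id_r, gmul_1r, hedge_one in H.
  eapply rst_trans; [apply rst_sym | exact H].
  exact (loop_equiv_drop_base [_] [] true).
Qed.

Definition hedge_class (c : Ob C) (x : fobj F c) : edge_path_group :=
  loop_class [(hedge c c (idm c) x, true)].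

Lemma hedge_class_cocone : is_cocone F hedge_class.
Proof.
  split.
  - intros c x y. unfold hedge_class. rewrite loop_class_app.
    apply loop_class_eq, rst_sym.
    pose proof (loop_equiv_hedge_comp c c c (idm c) (idm c) x y) as H.
    rewrite fmap_id, comp_id_l in H. exact H.
  - intros a b f x. unfold hedge_class. apply loop_class_eq.
    eapply rst_trans; [| apply rst_sym, loop_equiv_hedge_idm].
    pose proof (loop_equiv_hedge_comp a b b f (idm b) gone x) as H.
    rewrite comp_id_l, gmul_1l, hedge_one in H.
    eapply rst_trans; [apply rst_sym | exact H].
    exact (loop_equiv_drop_base [] _ true).
Qed.

Section Cocone.
Variables (L : Grp) (iota : forall c, fobj F c -> L).
Hypothesis iota_cocone : is_cocone F iota.

Definition hedge_eval (e : X 1) : L :=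
  match e with
  | None => gone
  | Some (existT _ c (_, exist _ x _)) => iota c (fst x)
  end.

Lemma hedge_eval_hmk c ch x : hedge_eval (hmk C F 1 c ch (x, tt)) = iota c x.
Proof.
  unfold hmk. destruct (excluded_middle_informative _) as [e |]; [| reflexivity].
  injection e as ->. symmetry; apply hom_one, (proj1 iota_cocone).
Qed.

Lemma hedge_eval_degen w : hedge_eval (hdeg C F 0 0 w) = gone.
Proof. rewrite (hsimp0_base w). reflexivity. Qed.

Lemma hedge_eval_tri sg :
  gmul (hedge_eval (hface C F 1 2 sg)) (hedge_eval (hface C F 1 0 sg))
  = hedge_eval (hface C F 1 1 sg).
Proof.
  destruct sg as [[c [[c1 [f [c2 [g []]]]] [[x1 [x2 []]] nx]]] |]; simpl.
  - rewrite !hedge_eval_hmk, (proj2 iota_cocone). symmetry; apply (proj1 iota_cocone).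
  - apply gmul_1l.
Qed.

End Cocone.

Lemma hocolim_pi1_iso (L : Grp) (iota : forall c, fobj F c -> L) :
  is_colimit F iota ->
  pi1_iso X (hface C F) (hdeg C F) (hbase C F) L (word_eval X L (hedge_eval L iota)).
Proof.
  intros Hcol. pose proof (proj1 Hcol) as Hcoc.
  pose proof (hedge_eval_degen L iota) as Hdegen.
  pose proof (hedge_eval_tri L iota Hcoc) as Htri.
  destruct (proj2 Hcol _ hedge_class hedge_class_cocone) as [u [Hu Hui]].
  apply (pi1_iso_of_inverse _ _ _ _ hsimp0_base L _ Hdegen Htri u).
  - apply (loop_class_word_eval _ _ _ _ hsimp0_base L _ u Hu).
    intros [[c [[c' [f []]] [[x []] nx]]] |]; simpl.
    + rewrite (proj1 Hui). apply loop_class_eq.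
      rewrite <- (hmk_some 1 c _ _ nx). apply rst_sym, (loop_equiv_hedge_idm c c' f x).
    + rewrite (hom_one u Hu). apply loop_class_eq.
      exact (loop_equiv_drop_base [] [] true).
  - apply (colimit_endo_id F L iota _ Hcol).
    + intros a b. rewrite Hu. apply (class_eval_hom _ _ _ _ _ L _ Hdegen Htri).
    + intros c x. rewrite (proj1 Hui). unfold hedge_class.
      rewrite (class_eval_loop_class _ _ _ _ _ L _ Hdegen Htri).
      simpl. rewrite gmul_1r. apply (hedge_eval_hmk L iota Hcoc).
Qed.

End Hocolim.

Theorem mainTheorem8 (C : Cat) (F : GrpFunctor C)
  (L : Grp) (iota : forall c, fobj F c -> L) :
  is_colimit F iota ->
  (exists phi, pi1_iso (hsimp C F) (hface C F) (hdeg C F) (hbase C F) L phi) /\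
  (simply_connected (hsimp C F) (hface C F) (hdeg C F) (hbase C F) <->
     forall y : L, y = gone).
Proof.
  intros Hcol.
  pose proof (hocolim_pi1_iso C F L iota Hcol) as Hiso.
  split; [eexists; exact Hiso |].
  exact (simply_connected_iff_trivial _ _ _ _ (hsimp0_base C F) L _ Hiso).
Qed.
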